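(* For a glass relaxing isothermally at fixed medium temperature $T_0$ and pressure $P_0$, with $T_0<T_{0\text{g}}$ and $S>S_{\text{SCL}}$, the enthalpy satisfies $H(T_0,P_0,t)>H_{\text{SCL}}(T_0,P_0)$.
   Context: The system is in contact with a large equilibrium medium at fixed $T_0,P_0$ and is in internal equilibrium with instantaneous temperature $T(t)$ defined by $1/T=\partial S/\partial E$, where $S(E,V,\boldsymbol{\xi})$ is the entropy as a function of energy, volume and internal variables. Below $T_{0\text{g}}$ the system is out of equilibrium with the medium, and during relaxation $T(t)>T_0$, with $T(t)\to T_0$ from above. The enthalpy is $H=E+P_0V$, and for an isobaric process $dH=d_{\text{e}}Q=T_0\,d_{\text{e}}S$, where $d_{\text{e}}Q$, $d_{\text{e}}S$ are the heat and entropy exchanged with the medium. The second law gives $[T_0-T(t)]d_{\text{e}}S(t)\ge0$. $H_{\text{SCL}}(T_0,P_0)$ and $S_{\text{SCL}}$ are the enthalpy and entropy of the equilibrium supercooled liquid at $T_0,P_0$; $T_{0\text{g}}$ is the temperature below which the system falls out of equilibrium on the observation time scale. *)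

From Stdlib Require Import Reals.
From Coquelicot Require Export Coquelicot.
Open Scope R_scope.

Definition enthalpy (P0 : R) (E V : R -> R) (t : R) : R := E t + P0 * V t.

(* Below T0g the internal temperature exceeds T0, so the second law forces
   d_eS <= 0 and hence dH = T0 d_eS <= 0: the enthalpy decreases towards
   H_SCL and H >= H_SCL.  If H t = H_SCL at some time t, then H is constant
   from t on, hence so is the exchanged entropy S_e; the total entropy
   S = S_e + S_i then only grows through d_iS >= 0, so S t <= S_SCL,
   contradicting S > S_SCL. *)
From Stdlib Require Import Reals Lra.
From Coquelicot Require Import Coquelicot.
Open Scope R_scope.

Section DerivativeOnHalfLine.

Variables (a : R) (f df : R -> R).
Hypothesis f_derive : forall t, a <= t -> is_derive f t (df t).

Lemma mvt_half_line x y : a <= x <= y ->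
  exists c, x <= c <= y /\ f y - f x = df c * (y - x).
Proof.
  intros Hxy.
  destruct (MVT_gen f x y df) as [c [Hc Heq]].
  - intros s Hs. apply f_derive. rewrite Rmin_left in Hs by lra. lra.
  - intros s Hs. rewrite Rmin_left, Rmax_right in Hs by lra.
    apply continuity_pt_filterlim, (@ex_derive_continuous R_AbsRing R_NormedModule).
    exists (df s). apply f_derive. lra.
  - rewrite Rmin_left, Rmax_right in Hc by lra. now exists c.
Qed.

Lemma nondecreasing_of_derive_nonneg x y :
  (forall t, a <= t -> 0 <= df t) -> a <= x <= y -> f x <= f y.
Proof.
  intros Hdf Hxy. destruct (mvt_half_line x y Hxy) as [c [Hc Heq]].
  assert (0 <= df c) by (apply Hdf; lra). nra.
Qed.

Lemma nonincreasing_of_derive_nonpos x y :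
  (forall t, a <= t -> df t <= 0) -> a <= x <= y -> f y <= f x.
Proof.
  intros Hdf Hxy. destruct (mvt_half_line x y Hxy) as [c [Hc Heq]].
  assert (df c <= 0) by (apply Hdf; lra). nra.
Qed.

Lemma constant_of_derive_zero x y :
  (forall t, a <= t -> df t = 0) -> a <= x <= y -> f y = f x.
Proof.
  intros Hdf Hxy. destruct (mvt_half_line x y Hxy) as [c [Hc Heq]].
  rewrite Hdf in Heq by lra. lra.
Qed.

End DerivativeOnHalfLine.

Lemma sub_scal_const_of_derive_eq a k (f g df dg : R -> R) x y :
  (forall t, a <= t -> is_derive f t (df t)) ->
  (forall t, a <= t -> is_derive g t (dg t)) ->
  (forall t, a <= t -> df t = k * dg t) ->
  a <= x <= y -> f y - k * g y = f x - k * g x.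
Proof.
  intros Hf Hg Hdf.
  apply (constant_of_derive_zero a (fun s => f s - k * g s) (fun s => df s - k * dg s)).
  - intros t Ht. apply (is_derive_minus f (fun s => k * g s)); [now apply Hf |].
    now apply is_derive_scal, Hg.
  - intros t Ht. rewrite Hdf by exact Ht. ring.
Qed.

Section MonotoneLimit.

Variables (l : R) (f : R -> R).
Hypothesis f_lim : is_lim f p_infty l.

Lemma le_lim_of_nondecreasing x :
  (forall y, x <= y -> f x <= f y) -> f x <= l.
Proof.
  intros Hmono.
  apply (is_lim_le_loc (fun _ => f x) f p_infty (f x) l); [| apply is_lim_const | exact f_lim].
  exists x. intros y Hy. apply Hmono. lra.
Qed.

Lemma lim_le_of_nonincreasing x :
  (forall y, x <= y -> f y <= f x) -> l <= f x.
Proof.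
  intros Hmono.
  apply (is_lim_le_loc f (fun _ => f x) p_infty l (f x)); [| exact f_lim | apply is_lim_const].
  exists x. intros y Hy. apply Hmono. lra.
Qed.

Lemma nonincreasing_const_of_eq_lim x :
  (forall y z, x <= y <= z -> f z <= f y) -> f x = l ->
  forall y, x <= y -> f y = l.
Proof.
  intros Hmono Hx y Hy.
  assert (f y <= f x) by (apply Hmono; lra).
  assert (l <= f y) by (apply lim_le_of_nonincreasing; intros z Hz; apply Hmono; lra).
  lra.
Qed.

End MonotoneLimit.

Lemma exchanged_entropy_rate_nonpos (T0 T dSe : R) :
  T > T0 -> (T0 - T) * dSe >= 0 -> dSe <= 0.
Proof. intros HT H2. nra. Qed.

Theorem theorem4
  (T0 P0 T0g HSCL SSCL : R) (E V T Se Si dH dSe dSi : R -> R) :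
  0 < T0 -> T0 < T0g ->
  (forall t, 0 <= t -> T t > T0) ->
  (forall t, 0 <= t -> is_derive (enthalpy P0 E V) t (dH t)) ->
  (forall t, 0 <= t -> is_derive Se t (dSe t)) ->
  (forall t, 0 <= t -> is_derive Si t (dSi t)) ->
  (forall t, 0 <= t -> dH t = T0 * dSe t) ->
  (forall t, 0 <= t -> (T0 - T t) * dSe t >= 0) ->
  (forall t, 0 <= t -> dSi t >= 0) ->
  (forall t, 0 <= t -> Se t + Si t > SSCL) ->
  is_lim (fun t => Se t + Si t) p_infty SSCL ->
  is_lim (enthalpy P0 E V) p_infty HSCL ->
  forall t, 0 <= t -> enthalpy P0 E V t > HSCL.
Proof.
  intros HT0 _ HT HdH HdSe HdSi Hiso H2 HdSi_pos HS HlimS HlimH t Ht.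
  set (H := enthalpy P0 E V) in *.
  assert (H_mono : forall y z, 0 <= y <= z -> H z <= H y).
  { intros y z. apply (nonincreasing_of_derive_nonpos 0 H dH HdH). intros s Hs.
    rewrite Hiso by exact Hs.
    pose proof (exchanged_entropy_rate_nonpos _ _ _ (HT s Hs) (H2 s Hs)). nra. }
  assert (H_ge : HSCL <= H t).
  { apply (lim_le_of_nonincreasing HSCL H HlimH). intros y Hy. apply H_mono. lra. }
  destruct (Rle_lt_or_eq_dec _ _ H_ge) as [| Heq]; [lra | exfalso].
  assert (H_const : forall y, t <= y -> H y = H t).
  { intros y Hy. rewrite <- Heq. apply (nonincreasing_const_of_eq_lim HSCL H HlimH t);
      [intros; apply H_mono; lra | now symmetry | exact Hy]. }
  assert (S_mono : forall y, t <= y -> Se t + Si t <= Se y + Si y).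
  { intros y Hy.
    assert (Se y = Se t).
    { pose proof (sub_scal_const_of_derive_eq 0 T0 H Se dH dSe t y HdH HdSe Hiso
        (conj Ht Hy)) as HSe.
      rewrite H_const in HSe by exact Hy. apply Rmult_eq_reg_l with T0; lra. }
    assert (Si t <= Si y).
    { apply (nondecreasing_of_derive_nonneg 0 Si dSi HdSi); [| lra].
      intros s Hs. apply Rge_le, HdSi_pos, Hs. }
    lra. }
  pose proof (le_lim_of_nondecreasing SSCL (fun s => Se s + Si s) HlimS t S_mono).
  pose proof (HS t Ht). lra.
Qed.
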